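(* Let $\operatorname{R}_3=\{a_0,a_1,a_2\}$ be the dihedral quandle of order $3$, with $a_ia_j=a_{2j-i \pmod 3}$. Then $\operatorname{Aut}(\mathbb{Z}[\operatorname{R}_3])\cong\Sigma_3\cong\operatorname{Aut}(\operatorname{R}_3)$.
   Context: For a quandle $Q$, the quandle ring $\mathbb{Z}[Q]$ is the free abelian group with basis $Q$, with multiplication $\big(\sum_i\alpha_i q_i\big)\big(\sum_j\beta_j q_j\big)=\sum_{i,j}\alpha_i\beta_j (q_iq_j)$. $\operatorname{Aut}(\mathbb{Z}[Q])$ denotes the group of ring automorphisms of $\mathbb{Z}[Q]$, $\operatorname{Aut}(Q)$ the group of quandle automorphisms of $Q$, and $\Sigma_3$ the symmetric group on three letters. *)

From HB Require Import structures.
From mathcomp Require Import all_boot all_order all_algebra all_fingroup.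
Set Implicit Arguments. Unset Strict Implicit. Unset Printing Implicit Defensive.
Import GRing.Theory.
Local Open Scope ring_scope.

Definition r3op (i j : 'I_3) : 'I_3 := inord ((2 * j + 3 - i) %% 3)%N.

Definition quandle_aut (T : finType) (op : T -> T -> T) : {set {perm T}} :=
  [set s : {perm T} | [forall i, forall j, s (op i j) == op (s i) (s j)]].

(* The quandle ring Z[Q]: free abelian group on Q, elements are finitely
   supported (here: all, Q finite) functions Q -> int. *)
Definition qring (T : finType) := {ffun T -> int}.

(* Multiplication (sum_i x_i q_i)(sum_j y_j q_j) = sum_{i,j} x_i y_j (q_i q_j). *)
Definition qring_mul (T : finType) (op : T -> T -> T) (x y : qring T) : qring T :=
  [ffun k => \sum_(i : T) \sum_(j : T) (if op i j == k then x i * y j else 0)].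

Definition qring_aut (T : finType) (op : T -> T -> T) (f : qring T -> qring T) : Prop :=
  [/\ bijective f,
      forall x y, f (x + y) = f x + f y &
      forall x y, f (qring_mul op x y) = qring_mul op (f x) (f y)].

(* A ring automorphism of Z[Q] maps nonzero idempotents to nonzero idempotents.  In
   Z[R_3] the coordinate equations of v^2 = v force the coordinates of v to have
   pairwise disjoint supports, so the nonzero idempotents are exactly the basis
   elements a_i.  Hence every automorphism of Z[R_3] permutes the basis, i.e. is
   induced by a permutation of R_3; conversely every permutation of R_3 is a quandle
   automorphism, because a_i a_j is the third element whenever i <> j. *)

From HB Require Import structures.
From mathcomp Require Import all_boot all_order all_algebra all_fingroup.
From mathcomp Require Import zify ring.
Set Implicit Arguments. Unset Strict Implicit. Unset Printing Implicit Defensive.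
Import GRing.Theory.
Local Open Scope ring_scope.

Section QuandleRing.
Variables (T : finType) (op : T -> T -> T).

Definition qbasis (i : T) : qring T := [ffun k => (k == i)%:R].

Lemma qbasisE i k : qbasis i k = (k == i)%:R.
Proof. exact: ffunE. Qed.

Lemma qbasis_inj : injective qbasis.
Proof.
move=> i j /ffunP/(_ i); rewrite !qbasisE eqxx.
by case: eqP => // _ /eqP; rewrite oner_eq0.
Qed.

Lemma qbasis_neq0 i : qbasis i != 0.
Proof.
by apply/negP => /eqP/ffunP/(_ i); rewrite qbasisE ffunE eqxx => /eqP; rewrite oner_eq0.
Qed.

Lemma qring_expand (x : qring T) : x = \sum_i qbasis i *~ x i.
Proof.
apply/ffunP => k; rewrite sum_ffunE (bigD1 k) //= big1 => [|i ik].
  by rewrite ffunMzE ffunE eqxx addr0 intz.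
by rewrite ffunMzE ffunE eq_sym (negbTE ik) mul0rz.
Qed.

Lemma qring_mul_basis i j : qring_mul op (qbasis i) (qbasis j) = qbasis (op i j).
Proof.
apply/ffunP => k; rewrite !ffunE (bigD1 i) //= [X in _ + X]big1 => [|i' i'i].
  rewrite (bigD1 j) //= big1 => [|j' j'j].
    by rewrite !qbasisE !eqxx mulr1 eq_sym addr0; case: eqP.
  by rewrite !qbasisE (negbTE j'j) mulr0 if_same.
by apply: big1 => j' _; rewrite !qbasisE (negbTE i'i) mul0r if_same.
Qed.

Section Additive.
Variable f : qring T -> qring T.
Hypothesis fD : {morph f : x y / x + y}.

Lemma qring_additive0 : f 0 = 0.
Proof. by apply/(addrI (f 0)); rewrite -fD !addr0. Qed.

HB.instance Definition _ := GRing.isNmodMorphism.Build _ _ f (qring_additive0, fD).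

Lemma qring_additive_expand x : f x = \sum_i f (qbasis i) *~ x i.
Proof.
by rewrite {1}(qring_expand x) raddf_sum; apply: eq_bigr => i _; rewrite raddfMz.
Qed.
End Additive.

Definition qring_perm (s : {perm T}) (x : qring T) : qring T := [ffun k => x (s^-1%g k)].

Lemma qring_permD s : {morph qring_perm s : x y / x + y}.
Proof. by move=> x y; apply/ffunP => k; rewrite !ffunE. Qed.

Lemma qring_permM s t : qring_perm (s * t)%g =1 qring_perm t \o qring_perm s.
Proof. by move=> x; apply/ffunP => k; rewrite /= !ffunE invMg permM. Qed.

Lemma qring_permK s : cancel (qring_perm s) (qring_perm s^-1).
Proof. by move=> x; apply/ffunP => k; rewrite !ffunE invgK permK. Qed.

Lemma qring_permKV s : cancel (qring_perm s^-1) (qring_perm s).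
Proof. by move=> x; rewrite -{1}(invgK s) qring_permK. Qed.

Lemma qring_perm_basis s i : qring_perm s (qbasis i) = qbasis (s i).
Proof. by apply/ffunP => k; rewrite !ffunE (canF_eq (permKV s)). Qed.

Lemma qring_perm_inj s t : qring_perm s =1 qring_perm t -> s = t.
Proof.
move=> st; apply/permP => i; apply: qbasis_inj.
by rewrite -!qring_perm_basis st.
Qed.

Lemma qring_perm_mul (s : {perm T}) : {morph s : i j / op i j} ->
  {morph qring_perm s : x y / qring_mul op x y}.
Proof.
move=> sM x y; apply/ffunP => k; rewrite !ffunE [RHS](reindex_inj (@perm_inj _ s)).
apply: eq_bigr => i _; rewrite [RHS](reindex_inj (@perm_inj _ s)).
by apply: eq_bigr => j _; rewrite !ffunE !permK -sM (canF_eq (permK s)).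
Qed.

Lemma qring_perm_aut (s : {perm T}) :
  {morph s : i j / op i j} -> qring_aut op (qring_perm s).
Proof.
move=> sM; split; last exact: qring_perm_mul.
- exact: Bijective (qring_permK s) (qring_permKV s).
- exact: qring_permD.
Qed.

Lemma qring_aut_permuting_basis f : qring_aut op f ->
  (forall i, exists j, f (qbasis i) = qbasis j) -> exists s, f =1 qring_perm s.
Proof.
move=> [/bij_inj f_inj fD _] /fin_all_exists[g fg].
have g_inj : injective g.
  by move=> i j gij; apply/qbasis_inj/f_inj; rewrite !fg gij.
exists (perm g_inj) => x.
rewrite (qring_additive_expand fD) (qring_additive_expand (@qring_permD _)).
by apply: eq_bigr => i _; rewrite fg qring_perm_basis permE.
Qed.

Section Idempotents.
Hypothesis op_idem : idempotent_op op.

Lemma qbasis_idem i : qring_mul op (qbasis i) (qbasis i) = qbasis i.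
Proof. by rewrite qring_mul_basis op_idem. Qed.

Lemma qring_sqr_orthogonal (v : qring T) :
  (forall i j, i != j -> v i * v j = 0) -> forall k, qring_mul op v v k = v k * v k.
Proof.
move=> vij k; rewrite ffunE (bigD1 k) //= (bigD1 k) //= op_idem eqxx.
rewrite big1 => [|j jk]; last by rewrite vij ?if_same // eq_sym.
rewrite addr0 big1 ?addr0 // => i ik; apply: big1 => j _.
case: (eqVneq i j) => [<- | /vij ->]; last exact: if_same.
by rewrite op_idem (negbTE ik).
Qed.

Lemma qring_idem_orthogonal (v : qring T) : qring_mul op v v = v ->
  (forall i j, i != j -> v i * v j = 0) -> v = 0 \/ exists j, v = qbasis j.
Proof.
move=> vv vij; have vk2 k : v k * v k = v k by rewrite -qring_sqr_orthogonal ?vv.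
case: (pickP (fun k => v k != 0)) => [j vj | v0]; last first.
  by left; apply/ffunP => k; rewrite ffunE; apply/eqP/negbFE/v0.
right; exists j; apply/ffunP => k; rewrite qbasisE.
case: (eqVneq k j) => [-> | kj].
  by apply: (mulIf vj); rewrite mul1r vk2.
by move/eqP: (vij k j kj); rewrite mulf_eq0 (negbTE vj) orbF => /eqP.
Qed.
End Idempotents.

End QuandleRing.

(* Summing the three equations gives s^2 = s for s = a + b + c; subtracting the
   last two gives (b - c) (b + c - 2a - 1) = 0. *)
Lemma int_sqr_system_mul0 (a b c : int) :
  a * a + 2 * (b * c) = a -> b * b + 2 * (c * a) = b -> c * c + 2 * (a * b) = c ->
  b * c = 0.
Proof.
move=> Ha Hb Hc.
have sum01 : a + b + c = 0 \/ a + b + c = 1.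
  have : (a + b + c) * (a + b + c - 1) = 0 by lia.
  by move/eqP; rewrite mulf_eq0 subr_eq0 => /orP[] /eqP; [left | right].
have : (b - c) * (b + c - 2 * a - 1) = 0 by lia.
move/eqP; rewrite mulf_eq0 !subr_eq0 => /orP[] /eqP bc.
- have : b * (b + 2 * a - 1) = 0 by rewrite -bc in Hb; lia.
  move/eqP; rewrite mulf_eq0 => /orP[/eqP -> | /eqP]; first by rewrite mul0r.
  lia.
- have a0 : a = 0 by lia.
  rewrite a0 in Hb; lia.
Qed.

Lemma r3opP i j k :
  (r3op i j == k) = if i == j then k == i else (k != i) && (k != j).
Proof.
have r3opE i' j' : (r3op i' j' : nat) = ((2 * j' + 3 - i') %% 3)%N.
  by rewrite /r3op inordK // ltn_pmod.
by case: i j k => [[|[|[|?]]] ?] [[|[|[|?]]] ?] [[|[|[|?]]] ?] //;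
  rewrite -val_eqE /= r3opE.
Qed.

Lemma r3op_idem : idempotent_op r3op.
Proof. by move=> i; apply/eqP; rewrite r3opP eqxx. Qed.

Lemma r3op_morph (s : {perm 'I_3}) : {morph s : i j / r3op i j}.
Proof.
move=> i j; apply/eqP; rewrite eq_sym r3opP !(inj_eq perm_inj) -r3opP.
by rewrite eqxx.
Qed.

Lemma ord3P (k : 'I_3) :
  [\/ k = ord0, k = lift ord0 ord0 | k = lift ord0 (lift ord0 ord0)].
Proof.
by case: k => [[|[|[|?]]] ?] //; [constructor 1 | constructor 2 | constructor 3];
  apply: val_inj.
Qed.

Lemma r3_qring_sqrE (v : qring 'I_3) i j k : i != j -> k != i -> k != j ->
  qring_mul r3op v v k = v k * v k + 2 * (v i * v j).
Proof.
rewrite ffunE !big_ord_recl !big_ord0.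
by case: (ord3P i) => ->; case: (ord3P j) => ->; case: (ord3P k) => -> //= _ _ _;
  rewrite !r3opP /=; ring.
Qed.

Lemma r3_qring_idem (v : qring 'I_3) :
  qring_mul r3op v v = v -> v = 0 \/ exists j, v = qbasis j.
Proof.
move=> vv; apply: (qring_idem_orthogonal r3op_idem vv) => i j ij.
have := r3opP i j (r3op i j); rewrite eqxx (negbTE ij) => /esym/andP[ki kj].
have jk : j != r3op i j by rewrite eq_sym.
apply: (@int_sqr_system_mul0 (v (r3op i j))); rewrite -[in RHS]vv.
- by rewrite (r3_qring_sqrE _ ij).
- by rewrite (r3_qring_sqrE _ jk) // eq_sym.
- by rewrite mulrC (r3_qring_sqrE _ ki) // eq_sym.
Qed.

Lemma r3_qring_aut_basis f : qring_aut r3op f ->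
  forall i, exists j, f (qbasis i) = qbasis j.
Proof.
move=> [/bij_inj f_inj fD fM] i.
have fi_idem : qring_mul r3op (f (qbasis i)) (f (qbasis i)) = f (qbasis i).
  by rewrite -fM (qbasis_idem r3op_idem).
case: (r3_qring_idem fi_idem) => // fi0.
have fi_f0 : f (qbasis i) = f 0 by rewrite fi0 qring_additive0.
by have := qbasis_neq0 i; rewrite (f_inj _ _ fi_f0) eqxx.
Qed.

Lemma quandle_aut_r3 : quandle_aut r3op = [set: {perm 'I_3}].
Proof.
apply/setP => s; rewrite !inE.
by apply/forallP => i; apply/forallP => j; rewrite r3op_morph.
Qed.

Theorem proposition6p3 :
  (exists phi : {perm 'I_3} -> qring 'I_3 -> qring 'I_3,
      [/\ forall s, qring_aut r3op (phi s),
          forall s t, phi (s * t)%g =1 (phi t \o phi s),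
          forall s t, phi s =1 phi t -> s = t &
          forall f, qring_aut r3op f -> exists s, f =1 phi s])
  /\ (quandle_aut r3op \isog [set: {perm 'I_3}])%g.
Proof.
split; last by rewrite quandle_aut_r3 isog_refl.
exists (@qring_perm _); split.
- by move=> s; apply/qring_perm_aut/r3op_morph.
- exact: qring_permM.
- exact: qring_perm_inj.
- by move=> f fA; apply: qring_aut_permuting_basis fA (r3_qring_aut_basis fA).
Qed.
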